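(* In the $(3,2,2)$ scenario, the correlation $p(\vec x|\vec a)=\tfrac12\delta_{\vec x,(a_3,a_1,a_2)}+\tfrac12\delta_{\vec x,(\bar a_3,\bar a_1,\bar a_2)}$ (which has $p_{\rm gynin}=1$) is probabilistically consistent — it is realized by the Baumeler–Feix–Wolf classical process $p(\vec i|\vec o)=\tfrac12\delta_{\vec i,(o_3,o_1,o_2)}+\tfrac12\delta_{\vec i,(\bar o_3,\bar o_1,\bar o_2)}$ (with $I_k=O_k=\{0,1\}$) under the local interventions $p(x_k,o_k|a_k,i_k)=\delta_{x_k,i_k}\delta_{o_k,a_k}$ — but is not deterministically consistent. Consequently the set $\mathcal{DC}$ of deterministically consistent correlations is strictly contained in the set $\mathcal{PC}$ of probabilistically consistent correlations.
   Context: $(3,2,2)$ scenario: three parties, $a_k,x_k\in\{0,1\}$, $\bar a=1\oplus a$. $p_{\rm gynin}=\frac18\sum_{\vec a}\big[p((a_3,a_1,a_2)|\vec a)+p((\bar a_3,\bar a_1,\bar a_2)|\vec a)\big]$. For finite sets $I_k,O_k$, a conditional distribution $p(\vec i|\vec o)$ is a classical process if for all finite setting/outcome sets and all local interventions $p(x_k,o_k|a_k,i_k)$, the expression $\sum_{\vec i,\vec o}\prod_kp(x_k,o_k|a_k,i_k)p(\vec i|\vec o)$ is a valid conditional distribution over $\vec x$ for every $\vec a$. A process function is $\omega:\vec O\to\vec I$ with $\delta_{\vec i,\omega(\vec o)}$ a classical process. A correlation is probabilistically consistent ($\in\mathcal{PC}$) if it equals $\sum_{\vec i,\vec o}\prod_kp(x_k,o_k|a_k,i_k)p(\vec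 i|\vec o)$ for some finite $I_k,O_k$, local interventions, and a classical process $p(\vec i|\vec o)$; it is deterministically consistent ($\in\mathcal{DC}$) if moreover $p(\vec i|\vec o)$ can be taken to be a convex combination of process functions $\delta_{\vec i,\omega(\vec o)}$. *)

From HB Require Import structures.
From mathcomp Require Import all_boot all_order all_algebra.
From mathcomp Require Import reals.
Set Implicit Arguments. Unset Strict Implicit. Unset Printing Implicit Defensive.
Import Order.TTheory GRing.Theory Num.Theory.
Local Open Scope ring_scope.

(* Three parties; vectors are triples ((v1, v2), v3). *)

Definition cond_distr (R : realType) (Y Z : finType) (f : Y -> Z -> R) : Prop :=
  (forall y z, 0 <= f y z) /\ (forall z, \sum_(y : Y) f y z = 1).

(* A local intervention p(x,o|a,i), written M x o a i. *)
Definition local_intervention (R : realType) (X O A I : finType)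
  (M : X -> O -> A -> I -> R) : Prop :=
  (forall x o a i, 0 <= M x o a i) /\
  (forall a i, \sum_(xo : X * O) M xo.1 xo.2 a i = 1).

Definition induced (R : realType) (I1 I2 I3 O1 O2 O3 X1 X2 X3 A1 A2 A3 : finType)
  (M1 : X1 -> O1 -> A1 -> I1 -> R) (M2 : X2 -> O2 -> A2 -> I2 -> R)
  (M3 : X3 -> O3 -> A3 -> I3 -> R) (W : I1 * I2 * I3 -> O1 * O2 * O3 -> R)
  : X1 * X2 * X3 -> A1 * A2 * A3 -> R :=
  fun x a => \sum_(i : I1 * I2 * I3) \sum_(o : O1 * O2 * O3)
     M1 x.1.1 o.1.1 a.1.1 i.1.1 * M2 x.1.2 o.1.2 a.1.2 i.1.2 *
     M3 x.2 o.2 a.2 i.2 * W i o.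

Definition classical_process (R : realType) (I1 I2 I3 O1 O2 O3 : finType)
  (W : I1 * I2 * I3 -> O1 * O2 * O3 -> R) : Prop :=
  cond_distr W /\
  forall (X1 X2 X3 A1 A2 A3 : finType)
    (M1 : X1 -> O1 -> A1 -> I1 -> R) (M2 : X2 -> O2 -> A2 -> I2 -> R)
    (M3 : X3 -> O3 -> A3 -> I3 -> R),
    local_intervention M1 -> local_intervention M2 -> local_intervention M3 ->
    cond_distr (induced M1 M2 M3 W).

Definition delta_fun (R : realType) (I O : finType) (om : O -> I) : I -> O -> R :=
  fun i o => (i == om o)%:R.

Definition process_function (R : realType) (I1 I2 I3 O1 O2 O3 : finType)
  (om : O1 * O2 * O3 -> I1 * I2 * I3) : Prop :=
  classical_process (delta_fun R om).

Definition convex_pf (R : realType) (I1 I2 I3 O1 O2 O3 : finType)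
  (W : I1 * I2 * I3 -> O1 * O2 * O3 -> R) : Prop :=
  exists (n : nat) (lam : 'I_n -> R) (om : 'I_n -> O1 * O2 * O3 -> I1 * I2 * I3),
    (forall j, process_function R (om j)) /\ (forall j, 0 <= lam j) /\
    \sum_(j < n) lam j = 1 /\
    (forall i o, W i o = \sum_(j < n) lam j * delta_fun R (om j) i o).

Definition corr (R : realType) := bool * bool * bool -> bool * bool * bool -> R.

Definition PC (R : realType) (p : corr R) : Prop :=
  exists (I1 I2 I3 O1 O2 O3 : finType)
    (M1 : bool -> O1 -> bool -> I1 -> R) (M2 : bool -> O2 -> bool -> I2 -> R)
    (M3 : bool -> O3 -> bool -> I3 -> R) (W : I1 * I2 * I3 -> O1 * O2 * O3 -> R),
    [/\ local_intervention M1, local_intervention M2, local_intervention M3,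
        classical_process W & forall x a, p x a = induced M1 M2 M3 W x a].

Definition DC (R : realType) (p : corr R) : Prop :=
  exists (I1 I2 I3 O1 O2 O3 : finType)
    (M1 : bool -> O1 -> bool -> I1 -> R) (M2 : bool -> O2 -> bool -> I2 -> R)
    (M3 : bool -> O3 -> bool -> I3 -> R) (W : I1 * I2 * I3 -> O1 * O2 * O3 -> R),
    local_intervention M1 /\ local_intervention M2 /\ local_intervention M3 /\
    classical_process W /\ convex_pf W /\ (forall x a, p x a = induced M1 M2 M3 W x a).

Definition cyc (v : bool * bool * bool) : bool * bool * bool := (v.2, v.1.1, v.1.2).
Definition ncyc (v : bool * bool * bool) : bool * bool * bool := (~~ v.2, ~~ v.1.1, ~~ v.1.2).

Definition p_gynin (R : realType) (p : corr R) : R :=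
  8^-1 * \sum_(a : bool * bool * bool) (p (cyc a) a + p (ncyc a) a).

Definition p_ex (R : realType) : corr R :=
  fun x a => 2^-1 * (x == cyc a)%:R + 2^-1 * (x == ncyc a)%:R.

Definition W_BFW (R : realType) : bool * bool * bool -> bool * bool * bool -> R :=
  fun i o => 2^-1 * (i == cyc o)%:R + 2^-1 * (i == ncyc o)%:R.

Definition id_intervention (R : realType) : bool -> bool -> bool -> bool -> R :=
  fun x o a i => ((x == i) && (o == a))%:R.

From HB Require Import structures.
From mathcomp Require Import all_boot all_order all_algebra.
From mathcomp Require Import reals ring.
Import Order.TTheory GRing.Theory Num.Theory.
Set Implicit Arguments. Unset Strict Implicit. Unset Printing Implicit Defensive.
Local Open Scope ring_scope.

(* PC: with the identity interventions p(x,o|a,i) = [x = i][o = a] the induced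
   correlation of any process W is W itself, so p_ex, which has the same
   formula as the BFW process W_BFW, is realised by W_BFW.  That W_BFW is a
   classical process reduces, after summing out the settings x_k, to an
   algebraic identity for three stochastic bit channels (BFW_normalisation).

   not DC: a DC realisation of p_ex has a process function om with positive
   weight.  Fixing for each party one deterministic point (x_k, o_k) of the
   support of its intervention gives deterministic local feedback, and the
   process function has a unique fixed point s(a) for every input a
   (process_function_unique_fixpoint).  These fixed points obey a locality
   principle (fixpoint_locality), the resulting deterministic strategy wins
   the "guess your neighbour's input or its negation" game on every input,
   and a purely combinatorial argument about who can signal to whom shows
   that no such strategy exists (deterministic_strategy_loses). *)

Section FiniteSums.
Variable R : realType.

Lemma sum_pair (A B : finType) (F : A * B -> R) :
  \sum_(p : A * B) F p = \sum_(a : A) \sum_(b : B) F (a, b).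
Proof. by rewrite pair_bigA; apply: eq_bigr => -[]. Qed.

Lemma sum_delta (T : finType) (u : T) (F : T -> R) :
  \sum_(i : T) F i * (i == u)%:R = F u.
Proof.
rewrite (bigD1 u) //= eqxx mulr1 big1 ?addr0 // => i /negbTE ->.
by rewrite mulr0.
Qed.

Lemma sum_prod3 (X1 X2 X3 : finType) (F1 : X1 -> R) (F2 : X2 -> R) (F3 : X3 -> R) :
  \sum_(x : X1 * X2 * X3) F1 x.1.1 * F2 x.1.2 * F3 x.2 =
  (\sum_x F1 x) * (\sum_x F2 x) * (\sum_x F3 x).
Proof.
rewrite !sum_pair /= -mulrA mulr_suml; apply: eq_bigr => x1 _.
rewrite mulr_suml mulr_sumr; apply: eq_bigr => x2 _.
by rewrite !mulr_sumr; apply: eq_bigr => x3 _; rewrite mulrA.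
Qed.

Lemma indicator_triple (A B C : eqType) (u v : A * B * C) :
  (u.1.1 == v.1.1)%:R * (u.1.2 == v.1.2)%:R * (u.2 == v.2)%:R = (u == v)%:R :> R.
Proof.
by case: u v => [[u1 u2] u3] [[v1 v2] v3] /=; rewrite -!natrM !mulnb !xpair_eqE.
Qed.

Lemma indicator_sum_one (T : finType) (P : pred T) :
  \sum_(i : T) (P i)%:R = 1 :> R -> exists! i, P i.
Proof.
rewrite -natr_sum -(big_mkcond P (fun _ => 1%N)) /= sum1_card => /eqP.
rewrite pnatr_eq1 => /card1P [i Pi]; exists i; split => [|j].
  by move: (Pi i); rewrite !inE eqxx.
by move=> Pj; apply/esym/eqP; rewrite -[j == i]/(j \in pred1 i) -Pi.
Qed.

Lemma psum_gt0 (T : finType) (F : T -> R) (t : T) :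
  (forall i, 0 <= F i) -> 0 < F t -> 0 < \sum_i F i.
Proof.
move=> F_ge0 Ft_gt0; rewrite lt_def sumr_ge0 // andbT psumr_neq0 //.
by apply/hasP; exists t; rewrite ?mem_index_enum.
Qed.

Lemma positive_term_exists (T : finType) (F : T -> R) :
  (forall i, 0 <= F i) -> \sum_i F i = 1 -> exists t, 0 < F t.
Proof.
move=> F_ge0 F_sum.
have nz : \sum_i F i <> 0 by rewrite F_sum; exact/eqP/oner_neq0.
by have [t /andP [_ Ft]] := psumr_neq0P (fun i _ => F_ge0 i) nz; exists t.
Qed.

End FiniteSums.

Section InducedCorrelations.
Variables (R : realType) (I1 I2 I3 O1 O2 O3 X1 X2 X3 A1 A2 A3 : finType).
Variables (M1 : X1 -> O1 -> A1 -> I1 -> R) (M2 : X2 -> O2 -> A2 -> I2 -> R)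
  (M3 : X3 -> O3 -> A3 -> I3 -> R) (W : I1 * I2 * I3 -> O1 * O2 * O3 -> R).

Lemma induced_total a :
  \sum_x induced M1 M2 M3 W x a =
  \sum_i \sum_o (\sum_x M1 x o.1.1 a.1.1 i.1.1) * (\sum_x M2 x o.1.2 a.1.2 i.1.2) *
                (\sum_x M3 x o.2 a.2 i.2) * W i o.
Proof.
rewrite /induced exchange_big; apply: eq_bigr => i _.
rewrite exchange_big; apply: eq_bigr => o _.
rewrite -mulr_suml; congr (_ * _).
exact: (sum_prod3 (fun x => M1 x o.1.1 a.1.1 i.1.1)
          (fun x => M2 x o.1.2 a.1.2 i.1.2) (fun x => M3 x o.2 a.2 i.2)).
Qed.

Hypotheses (hM1 : local_intervention M1) (hM2 : local_intervention M2)
  (hM3 : local_intervention M3) (hW : cond_distr W).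

Lemma induced_term_ge0 x a i o :
  0 <= M1 x.1.1 o.1.1 a.1.1 i.1.1 * M2 x.1.2 o.1.2 a.1.2 i.1.2 * M3 x.2 o.2 a.2 i.2 *
       W i o.
Proof. by case: hM1 hM2 hM3 hW => [? _] [? _] [? _] [? _]; rewrite !mulr_ge0. Qed.

Lemma induced_ge0 x a : 0 <= induced M1 M2 M3 W x a.
Proof. by apply: sumr_ge0 => i _; apply: sumr_ge0 => o _; apply: induced_term_ge0. Qed.

Lemma induced_gt0 x a i o :
  0 < M1 x.1.1 o.1.1 a.1.1 i.1.1 -> 0 < M2 x.1.2 o.1.2 a.1.2 i.1.2 ->
  0 < M3 x.2 o.2 a.2 i.2 -> 0 < W i o -> 0 < induced M1 M2 M3 W x a.
Proof.
move=> p1 p2 p3 pW; apply: (psum_gt0 (t := i)) => [i'|].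
  by apply: sumr_ge0 => o' _; apply: induced_term_ge0.
by apply: (psum_gt0 (t := o)) => [o'|]; rewrite ?induced_term_ge0 ?mulr_gt0.
Qed.

End InducedCorrelations.

Lemma marginal_stochastic (R : realType) (X A I : finType)
  (M : X -> bool -> A -> I -> R) :
  local_intervention M -> forall a i,
  \sum_x M x true a i + \sum_x M x false a i = 1.
Proof.
by move=> [_ hM] a i; rewrite -(hM a i) sum_pair exchange_big big_bool.
Qed.

Section IdentityInterventions.
Variable R : realType.

Lemma id_intervention_split x o a i :
  id_intervention R x o a i = (i == x)%:R * (o == a)%:R.
Proof. by rewrite /id_intervention -natrM mulnb eq_sym. Qed.

Lemma id_intervention_local : local_intervention (id_intervention R).
Proof.
split=> [x o a i|a i]; first by rewrite ler0n.
rewrite sum_pair !big_bool /id_intervention.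
by case: a; case: i; rewrite /= ?addr0 ?add0r.
Qed.

Lemma induced_id_interventions (W : bool * bool * bool -> bool * bool * bool -> R) x a :
  induced (id_intervention R) (id_intervention R) (id_intervention R) W x a = W x a.
Proof.
have split3 i o : id_intervention R x.1.1 o.1.1 a.1.1 i.1.1 *
    id_intervention R x.1.2 o.1.2 a.1.2 i.1.2 * id_intervention R x.2 o.2 a.2 i.2 *
    W i o = W i o * (o == a)%:R * (i == x)%:R.
  rewrite !id_intervention_split -(indicator_triple R i x) -(indicator_triple R o a).
  by ring.
rewrite /induced; under eq_bigr do under eq_bigr do rewrite split3.
by under eq_bigr do rewrite -mulr_suml sum_delta; rewrite sum_delta.
Qed.

End IdentityInterventions.

Section BFWProcess.
Variable R : realType.

Lemma sum_W_BFW (F : bool * bool * bool -> R) o :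
  \sum_i F i * W_BFW R i o = 2^-1 * F (cyc o) + 2^-1 * F (ncyc o).
Proof.
rewrite /W_BFW; under eq_bigr do rewrite mulrDr ![F _ * (2^-1 * _)]mulrCA.
by rewrite big_split -!mulr_sumr !sum_delta.
Qed.

Lemma W_BFW_cond_distr : cond_distr (W_BFW R).
Proof.
split=> [i o|o]; first by rewrite /W_BFW addr_ge0 ?mulr_ge0 ?invr_ge0 ?ler0n.
have := sum_W_BFW (fun=> 1) o; under eq_bigr do rewrite mul1r.
by move=> ->; field.
Qed.

(* The BFW identity: feeding the process through any three stochastic bit
   channels yields total probability one. *)
Lemma BFW_normalisation (m1 m2 m3 : bool -> bool -> R) :
  (forall i, m1 true i + m1 false i = 1) ->
  (forall i, m2 true i + m2 false i = 1) ->
  (forall i, m3 true i + m3 false i = 1) ->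
  \sum_(o : bool * bool * bool)
     (2^-1 * (m1 o.1.1 (cyc o).1.1 * m2 o.1.2 (cyc o).1.2 * m3 o.2 (cyc o).2) +
      2^-1 * (m1 o.1.1 (ncyc o).1.1 * m2 o.1.2 (ncyc o).1.2 * m3 o.2 (ncyc o).2)) = 1.
Proof.
move=> h1 h2 h3.
have e1 i : m1 true i = 1 - m1 false i by rewrite -(h1 i) addrK.
have e2 i : m2 true i = 1 - m2 false i by rewrite -(h2 i) addrK.
have e3 i : m3 true i = 1 - m3 false i by rewrite -(h3 i) addrK.
by rewrite !sum_pair !big_bool /= !e1 !e2 !e3; field.
Qed.

Lemma W_BFW_classical : classical_process (W_BFW R).
Proof.
split=> [|X1 X2 X3 A1 A2 A3 M1 M2 M3 h1 h2 h3]; first exact: W_BFW_cond_distr.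
split=> [|a]; first exact: induced_ge0 h1 h2 h3 W_BFW_cond_distr.
rewrite induced_total exchange_big /=.
under eq_bigr do rewrite sum_W_BFW.
apply: (@BFW_normalisation (fun o i => \sum_x M1 x o a.1.1 i)
  (fun o i => \sum_x M2 x o a.1.2 i) (fun o i => \sum_x M3 x o a.2 i)) => i;
  exact: marginal_stochastic.
Qed.

Lemma p_gynin_p_ex : p_gynin (p_ex R) = 1.
Proof.
have certain a : p_ex R (cyc a) a + p_ex R (ncyc a) a = 1.
  by rewrite /p_ex !eqxx; case: a => [[[] []] []]; rewrite /= ?mulr0 ?mulr1; field.
rewrite /p_gynin (eq_bigr _ (fun a _ => certain a)) sumr_const.
by rewrite !card_prod !card_bool; field.
Qed.

Lemma p_ex_PC : PC (p_ex R).
Proof.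
exists bool, bool, bool, bool, bool, bool.
exists (id_intervention R), (id_intervention R), (id_intervention R), (W_BFW R).
split; [exact: id_intervention_local | exact: id_intervention_local |
        exact: id_intervention_local | exact: W_BFW_classical |].
by move=> x a; rewrite induced_id_interventions.
Qed.

End BFWProcess.

Section ProcessFunctions.
Variables (R : realType) (I1 I2 I3 O1 O2 O3 : finType).

Definition feedback (G1 : I1 -> O1) (G2 : I2 -> O2) (G3 : I3 -> O3)
  (i : I1 * I2 * I3) : O1 * O2 * O3 := (G1 i.1.1, G2 i.1.2, G3 i.2).

Definition det_intervention (I O : finType) (G : I -> O) :
  unit -> O -> unit -> I -> R :=
  fun _ o _ i => (o == G i)%:R.

Lemma det_intervention_local (I O : finType) (G : I -> O) :
  local_intervention (det_intervention G).
Proof.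
split=> [x o a i|a i]; first by rewrite ler0n.
rewrite sum_pair (big_pred1 tt) // (bigD1 (G i)) //= /det_intervention eqxx.
by rewrite big1 ?addr0 // => o /negbTE ->.
Qed.

(* Under deterministic feedback the induced total probability counts the fixed
   points of om \o feedback, so a process function has exactly one. *)
Lemma process_function_unique_fixpoint (om : O1 * O2 * O3 -> I1 * I2 * I3) :
  process_function R om -> forall G1 G2 G3,
  exists! i, i == om (feedback G1 G2 G3 i).
Proof.
move=> [_ hom] G1 G2 G3; apply: (indicator_sum_one (R := R)).
have [_ /(_ (tt, tt, tt))] := hom _ _ _ _ _ _ _ _ _ (det_intervention_local G1)
  (det_intervention_local G2) (det_intervention_local G3).
rewrite (big_pred1 (tt, tt, tt)) => [|[[[] []] []]] //.
rewrite /induced /det_intervention /delta_fun /= => total.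
rewrite -[RHS]total; apply: eq_bigr => i _.
under eq_bigr do rewrite (indicator_triple R _ (feedback G1 G2 G3 i)) mulrC.
by rewrite sum_delta.
Qed.

Lemma choose_own_input (A T : eqType) (x x' : A) (t t' : T) :
  (x != x' -> t != t') -> (if t == t' then x' else x) = x.
Proof.
by move=> sig; case: eqP => // e; apply/esym/eqP; apply: (contraTT sig); apply/eqP.
Qed.

Lemma triple_ext (A B C : Type) (u v : A * B * C) :
  u.1.1 = v.1.1 -> u.1.2 = v.1.2 -> u.2 = v.2 -> u = v.
Proof. by case: u v => [[? ?] ?] [[? ?] ?] /= -> -> ->. Qed.

(* Indeed, mixing the two feedbacks
   party-wise according to the received value makes both s a and s a' fixed
   points, hence equal by uniqueness. *)
Lemma fixpoint_locality (A1 A2 A3 : eqType) (om : O1 * O2 * O3 -> I1 * I2 * I3)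
  (g1 : A1 -> I1 -> O1) (g2 : A2 -> I2 -> O2) (g3 : A3 -> I3 -> O3)
  (s : A1 * A2 * A3 -> I1 * I2 * I3) :
  process_function R om ->
  (forall a, s a = om (feedback (g1 a.1.1) (g2 a.1.2) (g3 a.2) (s a))) ->
  forall a a', (a.1.1 != a'.1.1 -> (s a).1.1 != (s a').1.1) ->
    (a.1.2 != a'.1.2 -> (s a).1.2 != (s a').1.2) ->
    (a.2 != a'.2 -> (s a).2 != (s a').2) -> a = a'.
Proof.
move=> pf s_fix a a' d1 d2 d3.
pose mix1 i := g1 (if i == (s a').1.1 then a'.1.1 else a.1.1) i.
pose mix2 i := g2 (if i == (s a').1.2 then a'.1.2 else a.1.2) i.
pose mix3 i := g3 (if i == (s a').2 then a'.2 else a.2) i.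
have [i0 [_ unique_fix]] := process_function_unique_fixpoint pf mix1 mix2 mix3.
have fix_a : s a == om (feedback mix1 mix2 mix3 (s a)).
  by rewrite {1}s_fix /feedback /mix1 /mix2 /mix3 /= !choose_own_input.
have fix_a' : s a' == om (feedback mix1 mix2 mix3 (s a')).
  by rewrite {1}s_fix /feedback /mix1 /mix2 /mix3 /= !eqxx.
have same : s a = s a' by rewrite -(unique_fix _ fix_a) (unique_fix _ fix_a').
by apply: triple_ext; apply/eqP;
  [apply: (contraTT d1) | apply: (contraTT d2) | apply: (contraTT d3)]; rewrite same.
Qed.

Lemma convex_pf_gt0 n (lam : 'I_n -> R) (om : 'I_n -> O1 * O2 * O3 -> I1 * I2 * I3)
  (W : I1 * I2 * I3 -> O1 * O2 * O3 -> R) j o :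
  (forall j, 0 <= lam j) ->
  (forall i o, W i o = \sum_(k < n) lam k * delta_fun R (om k) i o) ->
  0 < lam j -> 0 < W (om j o) o.
Proof.
move=> lam_ge0 W_def lam_j; rewrite W_def (psum_gt0 (t := j)) // => [k|].
  by rewrite mulr_ge0 ?ler0n.
by rewrite /delta_fun eqxx mulr1.
Qed.

End ProcessFunctions.

Lemma intervention_support (R : realType) (X O A I : finType)
  (M : X -> O -> A -> I -> R) :
  local_intervention M ->
  exists r : A -> I -> X * O, forall a i, 0 < M (r a i).1 (r a i).2 a i.
Proof.
move=> [M_ge0 M_sum].
have : forall ai : A * I, exists xo : X * O, 0 < M xo.1 xo.2 ai.1 ai.2.
  by move=> [a i]; apply: positive_term_exists (M_sum a i) => -[x o]; apply: M_ge0.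
by case/fin_all_exists => r r_pos; exists (fun a i => r (a, i)) => a i; apply: r_pos.
Qed.

(* S1 b c is what party 1 receives when parties 2
   and 3 have inputs b and c, and similarly for S2 a c and S3 a b.  The
   hypotheses say: every input reaches one of the two other parties (reach),
   no two parties learn each other's inputs (one_way), and not all three
   parties learn something when all inputs flip (no_loop).  Following which
   party learns whose input forces a signalling cycle 1->2->3->1 or 1->3->2->1,
   and either cycle contradicts no_loop. *)
Section SignallingOrientations.
Variables (T1 T2 T3 : eqType).
Variables (S1 : bool -> bool -> T1) (S2 : bool -> bool -> T2) (S3 : bool -> bool -> T3).

Hypothesis reach1 :
  forall b c, S2 false c != S2 true c \/ S3 false b != S3 true b.
Hypothesis reach2 :
  forall a c, S1 false c != S1 true c \/ S3 a false != S3 a true.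
Hypothesis reach3 :
  forall a b, S1 b false != S1 b true \/ S2 a false != S2 a true.
Hypothesis one_way12 : forall c, S1 false c = S1 true c \/ S2 false c = S2 true c.
Hypothesis one_way23 : forall a, S2 a false = S2 a true \/ S3 a false = S3 a true.
Hypothesis one_way31 : forall b, S1 b false = S1 b true \/ S3 false b = S3 true b.
Hypothesis no_loop :
  [\/ S1 false false = S1 true true, S2 false false = S2 true true
    | S3 false false = S3 true true].

(* If party 2 misses party 1's input for one value of a3, the signalling runs
   1->3->2->1 everywhere. *)
Lemma no_signalling_cycle_132 c0 : S2 false c0 = S2 true c0 -> False.
Proof.
move=> hide12.
have n31 b : S3 false b != S3 true b.
  by case: (reach1 b c0) => //; rewrite hide12 eqxx.
have e13 b : S1 b false = S1 b true.
  by case: (one_way31 b) => // h; move: (n31 b); rewrite h eqxx.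
have n23 a : S2 a false != S2 a true.
  by case: (reach3 a false) => //; rewrite e13 eqxx.
have e32 a : S3 a false = S3 a true.
  by case: (one_way23 a) => // h; move: (n23 a); rewrite h eqxx.
have n12 c : S1 false c != S1 true c.
  by case: (reach2 false c) => //; rewrite e32 eqxx.
have e21 c : S2 false c = S2 true c.
  by case: (one_way12 c) => // h; move: (n12 c); rewrite h eqxx.
case: no_loop => h.
- by move: (n12 false); rewrite h -(e13 true) eqxx.
- by move: (n23 false); rewrite h (e21 true) eqxx.
- by move: (n31 false); rewrite h (e32 true) eqxx.
Qed.

(* If party 2 always learns party 1's input, the signalling runs 1->2->3->1. *)
Lemma no_signalling_cycle_123 : (forall c, S2 false c != S2 true c) -> False.
Proof.
move=> n21.
have e12 c : S1 false c = S1 true c.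
  by case: (one_way12 c) => // h; move: (n21 c); rewrite h eqxx.
have n32 a : S3 a false != S3 a true.
  by case: (reach2 a false) => //; rewrite e12 eqxx.
have e23 a : S2 a false = S2 a true.
  by case: (one_way23 a) => // h; move: (n32 a); rewrite h eqxx.
have n13 b : S1 b false != S1 b true.
  by case: (reach3 false b) => //; rewrite e23 eqxx.
have e31 b : S3 false b = S3 true b.
  by case: (one_way31 b) => // h; move: (n13 b); rewrite h eqxx.
case: no_loop => h.
- by move: (n13 false); rewrite h (e12 true) eqxx.
- by move: (n21 false); rewrite h (e23 true) eqxx.
- by move: (n32 false); rewrite h (e31 true) eqxx.
Qed.

Lemma no_consistent_signalling : False.
Proof.
apply: no_signalling_cycle_123 => c; apply/eqP => hide12.
exact: (no_signalling_cycle_132 hide12).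
Qed.

End SignallingOrientations.

Definition win (x a : bool * bool * bool) : bool := (x == cyc a) || (x == ncyc a).

Lemma win_parity x a : win x a ->
  [/\ x.1.1 (+) x.1.2 = a.2 (+) a.1.1, x.1.2 (+) x.2 = a.1.1 (+) a.1.2
    & x.2 (+) x.1.1 = a.1.2 (+) a.2].
Proof. by case: x a => [[[] []] []] [[[] []] []]. Qed.

(* A deterministic strategy: on inputs a party k receives (s a)_k and outputs
   f_k a_k (s a)_k.  The received values obey the locality principle. *)
Section DeterministicStrategies.
Variables (T1 T2 T3 : eqType) (s : bool * bool * bool -> T1 * T2 * T3).
Variables (f1 : bool -> T1 -> bool) (f2 : bool -> T2 -> bool) (f3 : bool -> T3 -> bool).

Definition agree_somewhere (a a' : bool * bool * bool) : bool :=
  [|| (a.1.1 != a'.1.1) && ((s a).1.1 == (s a').1.1),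
      (a.1.2 != a'.1.2) && ((s a).1.2 == (s a').1.2)
    | (a.2 != a'.2) && ((s a).2 == (s a').2)].

Hypothesis s_local : forall a a', a != a' -> agree_somewhere a a'.

(* A party's own input does not affect what it receives. *)
Definition received1 (b c : bool) : T1 := (s (false, b, c)).1.1.
Definition received2 (a c : bool) : T2 := (s (a, false, c)).1.2.
Definition received3 (a b : bool) : T3 := (s (a, b, false)).2.

Lemma receivedE1 x b c : (s (x, b, c)).1.1 = received1 b c.
Proof.
case: x => //; have /s_local : (true, b, c) != (false, b, c).
  by rewrite !xpair_eqE ?eqxx.
by rewrite /agree_somewhere /= ?eqxx /= ?orbF => /eqP.
Qed.

Lemma receivedE2 a x c : (s (a, x, c)).1.2 = received2 a c.
Proof.
case: x => //; have /s_local : (a, true, c) != (a, false, c).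
  by rewrite !xpair_eqE ?eqxx.
by rewrite /agree_somewhere /= ?eqxx /= ?orbF => /eqP.
Qed.

Lemma receivedE3 a b x : (s (a, b, x)).2 = received3 a b.
Proof.
case: x => //; have /s_local : (a, b, true) != (a, b, false).
  by rewrite !xpair_eqE ?eqxx.
by rewrite /agree_somewhere /= ?eqxx /= ?orbF => /eqP.
Qed.

Hypothesis wins :
  forall a, win (f1 a.1.1 (s a).1.1, f2 a.1.2 (s a).1.2, f3 a.2 (s a).2) a.

Theorem deterministic_strategy_loses : False.
Proof.
have xor_flip y : false (+) y = true (+) y -> False by case: y.
apply: (@no_consistent_signalling _ _ _ received1 received2 received3).
(* reach: if the other two parties missed a flip of party k's input, their
   outputs and hence the parity constraint on them could not change *)
- move=> b c; case: (eqVneq (received2 false c) (received2 true c)) => [e2|];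
    last by left.
  case: (eqVneq (received3 false b) (received3 true b)) => [e3|]; last by right.
  have [_ p _] := win_parity (wins (false, b, c)).
  have [_ q _] := win_parity (wins (true, b, c)).
  by move: p q; rewrite /= !receivedE2 !receivedE3 e2 e3 => -> /xor_flip.
- move=> a c; case: (eqVneq (received1 false c) (received1 true c)) => [e1|];
    last by left.
  case: (eqVneq (received3 a false) (received3 a true)) => [e3|]; last by right.
  have [_ _ p] := win_parity (wins (a, false, c)).
  have [_ _ q] := win_parity (wins (a, true, c)).
  by move: p q; rewrite /= !receivedE1 !receivedE3 e1 e3 => -> /xor_flip.
- move=> a b; case: (eqVneq (received1 b false) (received1 b true)) => [e1|];
    last by left.
  case: (eqVneq (received2 a false) (received2 a true)) => [e2|]; last by right.
  have [p _ _] := win_parity (wins (a, b, false)).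
  have [q _ _] := win_parity (wins (a, b, true)).
  by move: p q; rewrite /= !receivedE1 !receivedE2 e1 e2 => -> /xor_flip.
(* one_way and no_loop: locality for inputs differing in two or three places *)
- move=> c; have /s_local : (false, false, c) != (true, true, c).
    by rewrite !xpair_eqE ?eqxx.
  rewrite /agree_somewhere /= ?eqxx /= ?orbF !receivedE1 !receivedE2.
  by case/orP => /eqP; [left | right].
- move=> a; have /s_local : (a, false, false) != (a, true, true).
    by rewrite !xpair_eqE ?eqxx.
  rewrite /agree_somewhere /= ?eqxx /= ?orbF !receivedE2 !receivedE3.
  by case/orP => /eqP; [left | right].
- move=> b; have /s_local : (false, b, false) != (true, b, true).
    by rewrite !xpair_eqE ?eqxx.
  rewrite /agree_somewhere /= ?eqxx /= ?orbF !receivedE1 !receivedE3.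
  by case/orP => /eqP; [left | right].
- have /s_local : (false, false, false) != (true, true, true).
    by rewrite !xpair_eqE ?eqxx.
  rewrite /agree_somewhere /= !receivedE1 !receivedE2 !receivedE3.
  by case/or3P => /eqP; [constructor 1 | constructor 2 | constructor 3].
Qed.

End DeterministicStrategies.

Lemma fixpoint_agree_somewhere (R : realType) (I1 I2 I3 O1 O2 O3 : finType)
  (om : O1 * O2 * O3 -> I1 * I2 * I3) (g1 : bool -> I1 -> O1)
  (g2 : bool -> I2 -> O2) (g3 : bool -> I3 -> O3)
  (s : bool * bool * bool -> I1 * I2 * I3) :
  process_function R om ->
  (forall a, s a = om (feedback (g1 a.1.1) (g2 a.1.2) (g3 a.2) (s a))) ->
  forall a a', a != a' -> agree_somewhere s a a'.
Proof.
move=> pf s_fix a a' ne; apply: contraNT ne => /norP [h1 /norP [h2 h3]].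
apply/eqP; apply: (fixpoint_locality pf s_fix) => d.
- by apply: contraNN h1 => e; rewrite d e.
- by apply: contraNN h2 => e; rewrite d e.
- by apply: contraNN h3 => e; rewrite d e.
Qed.

Lemma p_ex_support (R : realType) x a : 0 < p_ex R x a -> win x a.
Proof.
rewrite /p_ex /win; case: (x == cyc a); case: (x == ncyc a) => //=.
by rewrite !mulr0 addr0 ltxx.
Qed.

(* In a DC realisation, a process function of positive weight together with
   one support point of each intervention would be a deterministic strategy
   winning on every input. *)
Theorem p_ex_not_DC (R : realType) : ~ DC (p_ex R).
Proof.
move=> [I1 [I2 [I3 [O1 [O2 [O3 [M1 [M2 [M3 [W [hM1 [hM2 [hM3 [hW
  [[n [lam [om [pf [lam_ge0 [lam_sum W_def]]]]]] realises]]]]]]]]]]]]]]].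
have [j lam_j] := positive_term_exists lam_ge0 lam_sum.
have [r1 r1_pos] := intervention_support hM1.
have [r2 r2_pos] := intervention_support hM2.
have [r3 r3_pos] := intervention_support hM3.
pose g1 a i := (r1 a i).2; pose g2 a i := (r2 a i).2; pose g3 a i := (r3 a i).2.
have : forall a : bool * bool * bool,
    exists i, i = om j (feedback (g1 a.1.1) (g2 a.1.2) (g3 a.2) i).
  move=> a; have [i [i_fix _]] :=
    process_function_unique_fixpoint (pf j) (g1 a.1.1) (g2 a.1.2) (g3 a.2).
  by exists i; apply/eqP.
case/fin_all_exists => s s_fix.
apply: (@deterministic_strategy_loses _ _ _ s
  (fun a i => (r1 a i).1) (fun a i => (r2 a i).1) (fun a i => (r3 a i).1)).
- exact: fixpoint_agree_somewhere (pf j) s_fix.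
(* along the fixed point every factor of the induced correlation is positive *)
- move=> a; apply: (p_ex_support (R := R)); rewrite realises.
  apply: (induced_gt0 hM1 hM2 hM3 hW.1 (i := s a)
    (o := feedback (g1 a.1.1) (g2 a.1.2) (g3 a.2) (s a))); [exact: r1_pos |
    exact: r2_pos | exact: r3_pos |].
  by rewrite {1}s_fix; apply: (convex_pf_gt0 _ lam_ge0 W_def lam_j).
Qed.

Lemma DC_sub_PC (R : realType) (p : corr R) : DC p -> PC p.
Proof.
move=> [I1 [I2 [I3 [O1 [O2 [O3 [M1 [M2 [M3 [W [h1 [h2 [h3 [hW [_ hp]]]]]]]]]]]]]]].
by exists I1, I2, I3, O1, O2, O3, M1, M2, M3, W.
Qed.

Theorem theorem10 (R : realType) :
  p_gynin (p_ex R) = 1 /\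
  local_intervention (id_intervention R) /\
  classical_process (W_BFW R) /\
  (forall x a, p_ex R x a =
     induced (id_intervention R) (id_intervention R) (id_intervention R) (W_BFW R) x a) /\
  PC (p_ex R) /\
  ~ DC (p_ex R) /\
  (forall p : corr R, DC p -> PC p) /\
  (exists p : corr R, PC p /\ ~ DC p).
Proof.
split; first exact: p_gynin_p_ex.
split; first exact: id_intervention_local.
split; first exact: W_BFW_classical.
split; first by move=> x a; rewrite induced_id_interventions.
split; first exact: p_ex_PC.
split; first exact: p_ex_not_DC.
split; first exact: DC_sub_PC.
by exists (p_ex R); split; [exact: p_ex_PC | exact: p_ex_not_DC].
Qed.
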